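(* Let $k$ be a difference field of characteristic $0$ and $R=k\{y_1,\ldots,y_n\}$. If $\mathbf{u},\mathbf{v}\in\mathbb{N}[x]^n$ satisfy $\mathbf{u}\preceq\mathbf{v}$, then $\mathbf{y}^{\mathbf{v}}\in\langle\mathbf{y}^{\mathbf{u}}\rangle$.
   Context: A difference field is a field $k$ with a ring endomorphism $\sigma$; $R=k\{y_1,\ldots,y_n\}$ is the polynomial ring over $k$ in the variables $\sigma^j(y_i)$, with $\sigma$ extended naturally. For $p=\sum_ic_ix^i\in\mathbb{N}[x]$ and $a\in R$, $a^p=\prod_i(\sigma^i(a))^{c_i}$; $\mathbf{y}^{\mathbf{u}}=y_1^{u_1}\cdots y_n^{u_n}$. $\langle F\rangle$ is the smallest well-mixed $\sigma$-ideal containing $F$ (a $\sigma$-ideal $I$ is well-mixed if $ab\in I\Rightarrow a\sigma(b)\in I$). Partial order $\preceq$: for $f=\sum_{i}f_ix^i,g=\sum_ig_ix^i\in\mathbb{N}[x]$ (coefficients padded by zeros up to a common index $K$), $f\preceq g$ iff $\sum_{j=i}^Kf_j\le\sum_{j=i}^Kg_j$ for all $i=0,\ldots,K$; for vectors, $\mathbf{u}\preceq\mathbf{v}$ iff $u_i\preceq v_i$ for all $i$. *)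

From HB Require Import structures.
From mathcomp Require Import all_boot all_order all_algebra.
From mathcomp Require Import finmap.
From mathcomp.multinomials Require Import monalg.
Set Implicit Arguments. Unset Strict Implicit. Unset Printing Implicit Defensive.
Import Order.TTheory GRing.Theory.
Local Open Scope ring_scope.

(* The difference polynomial ring k{y_1,...,y_n}: the polynomial ring over k
   in the (infinitely many) variables sigma^j(y_i), i : 'I_n, j : nat.
   The variable sigma^j(y_i) is indexed by the pair (i, j). *)
Definition dvar (n : nat) := ('I_n * nat)%type.
Definition dpoly (k : comNzRingType) (n : nat) := {malg k[cmonom (dvar n)]}.

Definition Y (k : comNzRingType) (n : nat) (i : 'I_n) (j : nat) : dpoly k n :=
  << ucm ((i, j) : dvar n) >>.

Definition sigmaR (k : comNzRingType) (n : nat) (sigma : {rmorphism k -> k})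
    (g : dpoly k n) : dpoly k n :=
  \sum_(m <- msupp g)
     (sigma (g@_m))%:MP *
     \prod_(p <- finsupp m) Y k p.1 p.2.+1 ^+ (m p).

Definition dpow (k : comNzRingType) (n : nat) (sigma : {rmorphism k -> k})
    (a : dpoly k n) (p : {poly nat}) : dpoly k n :=
  \prod_(i < size p) (iter i (sigmaR sigma) a) ^+ (nth 0%N p i).

Definition ymon (k : comNzRingType) (n : nat) (sigma : {rmorphism k -> k})
    (u : 'I_n -> {poly nat}) : dpoly k n :=
  \prod_(i < n) dpow sigma (Y k i 0) (u i).

Definition poly_preceq (f g : {poly nat}) : Prop :=
  let K := maxn (size f) (size g) in
  forall i : nat, (i <= K)%N ->
    (\sum_(i <= j < K.+1) nth 0%N f j <= \sum_(i <= j < K.+1) nth 0%N g j)%N.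

Definition vec_preceq (n : nat) (u v : 'I_n -> {poly nat}) : Prop :=
  forall i : 'I_n, poly_preceq (u i) (v i).

Definition is_ideal (R : comNzRingType) (I : R -> Prop) : Prop :=
  [/\ I 0, (forall a b, I a -> I b -> I (a + b)) &
      (forall r a, I a -> I (r * a))].

Definition is_sigma_ideal (R : comNzRingType) (s : R -> R) (I : R -> Prop) :=
  is_ideal I /\ (forall a, I a -> I (s a)).

Definition is_well_mixed_sigma_ideal (R : comNzRingType) (s : R -> R)
    (I : R -> Prop) :=
  is_sigma_ideal s I /\ (forall a b, I (a * b) -> I (a * s b)).

Definition in_wm_closure (R : comNzRingType) (s : R -> R) (F : R -> Prop)
    (a : R) : Prop :=
  forall I : R -> Prop, is_well_mixed_sigma_ideal s I ->
    (forall f, F f -> I f) -> I a.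

From HB Require Import structures.
From mathcomp Require Import all_boot all_order all_algebra.
From mathcomp Require Import finmap.
From mathcomp.multinomials Require Import monalg.
From mathcomp Require Import zify.
Import GRing.Theory.
Local Open Scope ring_scope.

(* Write (I : x) for {a | a * x \in I}.  In a well-mixed sigma-ideal
   a * b \in I implies a * sigma b \in I, so (I : sigma^j y) is contained in
   (I : sigma^(j+1) y), and (I : x) is contained in (I : x * z) for any ideal.
   Containment of colon ideals is compatible with products, so for
   tail-sum dominated exponents f <= g the colon ideal of prod_j y_j^(f_j) is
   contained in that of prod_j y_j^(g_j): if f_0 <= g_0 raise f_0 to g_0,
   otherwise push the excess f_0 - g_0 up to index 1, and recurse on the
   higher indices.  Taking a = 1 turns y^u \in I into y^v \in I. *)

Section ColonIdeal.

Context {R : comNzRingType} (I : R -> Prop).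
Hypothesis idealM : forall r a, I a -> I (r * a).

Definition colon_sub (x y : R) : Prop := forall a, I (a * x) -> I (a * y).

Lemma colon_sub_refl x : colon_sub x x.
Proof. by []. Qed.

Lemma colon_sub_trans {x} y {z} : colon_sub x y -> colon_sub y z -> colon_sub x z.
Proof. by move=> xy yz a /xy /yz. Qed.

Lemma colon_sub_mulr x z : colon_sub x (x * z).
Proof. by move=> a /(idealM z); rewrite mulrC mulrA. Qed.

Lemma colon_subM {x1 y1 x2 y2} :
  colon_sub x1 y1 -> colon_sub x2 y2 -> colon_sub (x1 * x2) (y1 * y2).
Proof.
move=> xy1 xy2 a; rewrite !mulrA => /xy2; rewrite mulrAC => /xy1.
by rewrite mulrAC.
Qed.

Lemma colon_sub_prod {T : Type} (r : seq T) (F G : T -> R) :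
  (forall t, colon_sub (F t) (G t)) ->
  colon_sub (\prod_(t <- r) F t) (\prod_(t <- r) G t).
Proof.
move=> FG; elim: r => [|t r IH]; first by rewrite !big_nil.
by rewrite !big_cons; apply: colon_subM.
Qed.

Lemma colon_sub_expn {x y} e : colon_sub x y -> colon_sub (x ^+ e) (y ^+ e).
Proof.
move=> xy; elim: e => [|e IH]; first exact: colon_sub_refl.
by rewrite !exprS; apply: colon_subM.
Qed.

Lemma colon_sub_tail_dominated N (y : nat -> R) (f g : nat -> nat) :
  (forall j, colon_sub (y j) (y j.+1)) ->
  (forall i, (i <= N)%N ->
     (\sum_(i <= j < N) f j <= \sum_(i <= j < N) g j)%N) ->
  colon_sub (\prod_(0 <= j < N) y j ^+ f j) (\prod_(0 <= j < N) y j ^+ g j).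
Proof.
elim: N y f g => [|N IH] y f g y_shift fg; first by rewrite !big_geq.
have y_shift1 j : colon_sub (y j.+1) (y j.+2) by [].
have tail_dom i : (i <= N)%N ->
    (\sum_(i <= j < N) f j.+1 <= \sum_(i <= j < N) g j.+1)%N.
  by move=> le_iN; have := fg i.+1 le_iN; rewrite !big_add1.
have head := fg 0%N isT; rewrite !big_nat_recl //= in head.
rewrite !big_nat_recl //.
have [le_fg0 | lt_gf0] := leqP (f 0%N) (g 0%N).
  have raise_tail := colon_subM (colon_sub_refl (y 0%N ^+ f 0%N)) (IH _ _ _ y_shift1 tail_dom).
  apply: (colon_sub_trans _ raise_tail).
  rewrite -(subnKC le_fg0) exprD mulrAC; exact: colon_sub_mulr.
clear fg; case: N IH tail_dom head y_shift1 => [|N] IH tail_dom head y_shift1.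
  by move: head; rewrite !big_geq //; lia.
set e := (f 0%N - g 0%N)%N.
pose f1 j := if j is 0 then (f 1%N + e)%N else f j.+1.
have prod_f1 : \prod_(0 <= j < N.+1) y j.+1 ^+ f1 j =
    (\prod_(0 <= j < N.+1) y j.+1 ^+ f j.+1) * y 1%N ^+ e.
  by rewrite !big_nat_recl //= exprD mulrAC.
have sum_f1 i : (0 < i)%N ->
    (\sum_(i <= j < N.+1) f1 j = \sum_(i <= j < N.+1) f j.+1)%N.
  by move=> lt0i; apply: eq_big_nat => -[|j] //=; rewrite leqNgt lt0i.
have f1_dom i : (i <= N.+1)%N ->
    (\sum_(i <= j < N.+1) f1 j <= \sum_(i <= j < N.+1) g j.+1)%N.
  case: i => [|i] le_iN; last by rewrite sum_f1 //; exact: tail_dom.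
  by move: head; rewrite /= !big_nat_recl //= /e; lia.
rewrite -(subnKC (ltnW lt_gf0)) -/e exprD mulrAC.
apply: (colon_sub_trans _ (colon_subM (colon_sub_refl _) (colon_sub_expn e (y_shift 0%N)))).
rewrite -mulrA -prod_f1.
exact: colon_subM (colon_sub_refl _) (IH _ _ _ y_shift1 f1_dom).
Qed.

End ColonIdeal.

Section DifferencePolynomials.

Variables (k : comNzRingType) (n : nat) (sigma : {rmorphism k -> k}).

Lemma sigmaR_Y (i : 'I_n) j : sigmaR sigma (Y k i j) = Y k i j.+1.
Proof.
rewrite /sigmaR /Y msuppU1 big_seq_fset1 mcoeffU1 eqxx rmorph1 mul1r.
rewrite mdomU big_seq_fset1 ucmE eqxx expr1.
reflexivity.
Qed.

Lemma iter_sigmaR_Y (i : 'I_n) j : iter j (sigmaR sigma) (Y k i 0) = Y k i j.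
Proof. elim: j => [|j IH]; first reflexivity. rewrite iterS IH; exact: sigmaR_Y. Qed.

Lemma dpow_Y (i : 'I_n) (p : {poly nat}) N : (size p <= N)%N ->
  dpow sigma (Y k i 0) p = \prod_(0 <= j < N) Y k i j ^+ nth 0%N p j.
Proof.
move=> le_pN; rewrite /dpow.
rewrite (eq_bigr (fun j : 'I_(size p) => Y k i j ^+ nth 0%N p j)); last first.
  by move=> j _; rewrite (iter_sigmaR_Y i j).
rewrite -(big_mkord xpredT (fun j => Y k i j ^+ nth 0%N p j)).
rewrite (big_cat_nat (leq0n _) le_pN) /= [X in _ = _ * X]big1_seq ?mulr1 //.
by move=> j /andP[_]; rewrite mem_index_iota => /andP[le_pj _]; rewrite nth_default.
Qed.

Lemma colon_sub_dpow_Y (I : dpoly k n -> Prop) (i : 'I_n) (p q : {poly nat}) :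
  (forall r a, I a -> I (r * a)) ->
  (forall a b, I (a * b) -> I (a * sigmaR sigma b)) ->
  poly_preceq p q ->
  colon_sub I (dpow sigma (Y k i 0) p) (dpow sigma (Y k i 0) q).
Proof.
move=> idealM well_mixed pq; set K := maxn (size p) (size q).
rewrite (@dpow_Y i p K.+1); last exact: leq_trans (leq_maxl _ _) (leqnSn _).
rewrite (@dpow_Y i q K.+1); last exact: leq_trans (leq_maxr _ _) (leqnSn _).
apply: colon_sub_tail_dominated => // [j a | j le_jK].
  by move=> /well_mixed; rewrite (sigmaR_Y i j).
by have [/pq | lt_Kj] := leqP j K; last rewrite !big_geq.
Qed.

End DifferencePolynomials.

Theorem lemma4p4 (k : fieldType) (sigma : {rmorphism k -> k})
    (hchar : [pchar k] =i pred0) (n : nat) (u v : 'I_n -> {poly nat}) :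
  vec_preceq u v ->
  in_wm_closure (sigmaR sigma) (fun f => f = ymon sigma u) (ymon sigma v).
Proof.
move=> uv I [[[_ _ idealM] _] well_mixed] I_u.
have colon_sub_ymon : colon_sub I (ymon sigma u) (ymon sigma v).
  apply: colon_sub_prod => i.
  exact: colon_sub_dpow_Y idealM well_mixed (uv i).
by have := colon_sub_ymon 1; rewrite !mul1r; apply; apply: I_u.
Qed.
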